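(* For every $d\in\mathbb{N}$, the number of unlabeled $n$-vertex graphs in $\mathcal{X}_d$ is at least $n^{\frac{(d-2)n}{2}(1-o(1))}$ (as $n\to\infty$).
   Context: For a graph $G$, $s_k(G)$ is the number of unlabeled (isomorphism classes of) $k$-vertex subgraphs. An $n$-vertex graph $G$ is monotone $(c,\mathcal{Y},t)$-tiny if (1) for every integer $1\le k\le t(n)$ every $k$-vertex subgraph of $G$ is in $\mathcal{Y}$, and (2) for every integer $t(n)<k\le n$, $s_k(G)\le c^k$. $\mathcal{S}_d$ is the class of all graphs $G$ such that for every integer $k$ with $1000^{10(d+1)}\le k\le|V(G)|$, every $k$-vertex subgraph of $G$ has at most $k-1+k/\ln k$ edges. Let $c=c(d)$ be a constant such that, for $G_n$ uniform among graphs on $[n]$ with $\lceil d(n-1)/2\rceil$ edges, $\Pr[G_n$ is not monotone $(c,\mathcal{S}_d,\ln^2)$-tiny$]<200\sqrt{d/n}$ for all $n$ (such $c$ exists). Then $\mathcal{X}_d$ is the class of monotone $(c,\mathcal{S}_d,\ln^2)$-tiny unlabeled graphs $G$ having exactly $\lceil d(|V(G)|-1)/2\rceil$ edges, where $\ln^2(n)=(\ln n)^2$. *)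

From Stdlib Require Import Reals ClassicalEpsilon.
From mathcomp Require Import all_boot fingroup perm.

Set Implicit Arguments.
Unset Strict Implicit.
Unset Printing Implicit Defensive.
Local Open Scope R_scope.

(* Classical boolean reflection of a proposition (used only to form finite
   sets of graphs satisfying a real-valued property). *)
Definition pb (P : Prop) : bool :=
  if excluded_middle_informative P then true else false.

(* A graph embedded in the vertex universe 'I_n: a vertex set and an edge set;
   well-formedness (edges are 2-subsets of the vertex set) is [is_graph]. *)
Definition graph (n : nat) := ({set 'I_n} * {set {set 'I_n}})%type.

Definition is_graph n (G : graph n) : bool :=
  [forall e in G.2, (e \subset G.1) && (#|e| == 2)%N].

Definition subgraph n (H G : graph n) : bool :=
  [&& H.1 \subset G.1, H.2 \subset G.2 & is_graph H].

(* Relabelling by a permutation of the universe; two embedded graphs are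
   isomorphic iff one is a relabelling of the other. *)
Definition relabel n (s : {perm 'I_n}) (G : graph n) : graph n :=
  (s @: G.1, [set s @: (e : {set 'I_n}) | e in G.2]).

(* The isomorphism class (unlabeled graph) of G. *)
Definition iso_class n (G : graph n) : {set graph n} :=
  [set relabel s G | s : {perm 'I_n}].

Definition s_k n (G : graph n) (k : nat) : nat :=
  #|[set iso_class H | H in [set H : graph n | subgraph H G && (#|H.1| == k)%N]]|.

Definition in_Sd (d : nat) n (G : graph n) : Prop :=
  forall H : graph n, subgraph H G ->
    (1000 ^ (10 * (d + 1)) <= #|H.1|)%N ->
    (INR #|H.2| <= INR #|H.1| - 1 + INR #|H.1| / ln (INR #|H.1|)).

(* Monotone (c, Y, t)-tiny, for a graph G with |V(G)| = #|G.1|. *)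
Definition mono_tiny (c : R) (Y : forall n, graph n -> Prop) (t : nat -> R)
  n (G : graph n) : Prop :=
  (forall k : nat, (1 <= k)%N -> (INR k <= t #|G.1|) ->
     forall H : graph n, subgraph H G -> #|H.1| = k -> Y n H) /\
  (forall k : nat, (t #|G.1| < INR k) -> (k <= #|G.1|)%N ->
     (INR (s_k G k) <= c ^ k)).

Definition ln2 (n : nat) : R := (ln (INR n) ^ 2).

Definition Sd (d : nat) : forall n, graph n -> Prop := fun n G => in_Sd d G.

(* ceil(d (n-1) / 2), for n >= 1. *)
Definition nedges (d n : nat) : nat := ((d * (n - 1)).+1 %/ 2)%N.

Definition labelled (n m : nat) : {set graph n} :=
  [set G : graph n | [&& G.1 == setT, is_graph G & #|G.2| == m]].

Definition tinyb (d : nat) (c : R) n (G : graph n) : bool :=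
  pb (mono_tiny c (Sd d) ln2 G).

Definition prob_not_tiny (d : nat) (c : R) (n : nat) : R :=
  (INR #|[set G in labelled n (nedges d n) | ~~ tinyb d c G]|
   / INR #|labelled n (nedges d n)|).

Definition good_c (d : nat) (c : R) : Prop :=
  forall n : nat, (1 <= n)%N ->
    (prob_not_tiny d c n < 200 * sqrt (INR d / INR n)).

Definition countX (d : nat) (c : R) (n : nat) : nat :=
  #|[set iso_class G | G in [set G in labelled n (nedges d n) | tinyb d c G]]|.

From Stdlib Require Import Reals Lra.
From mathcomp Require Import all_boot fingroup perm zify.

(* Let m = ceil(d (n - 1) / 2) and N = C(n, 2).  There are C(N, m) labelled
   graphs on [n] with m edges.  Once 200 sqrt(d / n) <= 1/2, the hypothesis on
   c says that at least half of them are monotone tiny, and an isomorphism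
   class contains at most n! labelled graphs, so
       ((N - m) / m)^m <= C(N, m) <= 2 countX n! <= 2 countX n^n.
   Since (N - m) / m >= n / (2 d) for n >= 2 d + 3, taking logarithms gives
       ln countX >= (d - 2) n / 2 * ln n - defect,   defect = O(n),
   i.e. countX >= n^((d-2) n / 2 (1 - err)) with err = O(1 / ln n) -> 0 for
   d >= 3; for d <= 2 the exponent is nonpositive and countX >= 1 suffices. *)

(* Labelled graphs on [n] with m edges correspond to the m-subsets of the
   'C(n, 2) possible edges. *)
Lemma card_labelled_ge n m : ('C('C(n, 2), m) <= #|labelled n m|)%N.
Proof.
set pairs := [set e : {set 'I_n} | #|e| == 2].
have card_pairs : #|pairs| = 'C(n, 2) by rewrite card_draws card_ord.
rewrite -card_pairs -cards_draws.
rewrite -(@card_imset _ _ (fun E => (setT : {set 'I_n}, E))); last by move=> E1 E2 [].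
apply: subset_leq_card; apply/subsetP => G /imsetP [E].
rewrite inE => /andP [Epairs /eqP cardE] ->.
rewrite inE /= eqxx cardE eqxx andbT.
apply/forallP => e; apply/implyP => eE; rewrite subsetT /=.
by move/subsetP: Epairs => /(_ _ eE); rewrite inE.
Qed.

(* An isomorphism class is the orbit of [relabel], so it has at most n! members. *)
Lemma card_iso_class_le n (G : graph n) : (#|iso_class G| <= n`!)%N.
Proof.
rewrite -card_Sn; apply: leq_trans (leq_imset_card _ _) _; exact: max_card.
Qed.

Lemma imset_perm1 (T : finType) (A : {set T}) : [set (1%g : {perm T}) x | x in A] = A.
Proof. by rewrite (eq_imset _ (fun x => perm1 x)) imset_id. Qed.

Lemma mem_iso_class n (G : graph n) : G \in iso_class G.
Proof.
apply/imsetP; exists 1%g => //; case: G => V E.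
by rewrite /relabel /= imset_perm1 (eq_imset _ (fun e => @imset_perm1 _ e)) imset_id.
Qed.

Lemma card_le_classes n (T : {set graph n}) :
  (#|T| <= #|[set iso_class G | G in T]| * n`!)%N.
Proof.
set classes := [set iso_class G | G in T].
have T_covered : T \subset cover classes.
  apply/subsetP => G GT; apply/bigcupP; exists (iso_class G); first exact: imset_f.
  exact: mem_iso_class.
apply: leq_trans (subset_leq_card T_covered) _.
apply: leq_trans (leq_card_cover classes).1 _.
rewrite -sum_nat_const; apply: leq_sum => C /imsetP [G _ ->].
exact: card_iso_class_le.
Qed.

(* Monotonicity of x |-> x^e on nat, including e = 0. *)
Lemma leq_expn2r a b e : (a <= b)%N -> (a ^ e <= b ^ e)%N.
Proof. by case: e => // e ab; rewrite leq_exp2r. Qed.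

(* Each of the m factors of the falling factorial n^_m is at least n - m. *)
Lemma ffact_ge n m : ((n - m) ^ m <= n ^_ m)%N.
Proof.
elim: m n => [|m IH] n; first by rewrite ffactn0 expn0.
rewrite ffactnS expnS; apply: leq_mul; first exact: leq_subr.
by apply: leq_trans (IH n.-1); apply: leq_expn2r; lia.
Qed.

Lemma fact_le_expn m : (m`! <= m ^ m)%N.
Proof.
elim: m => [|m IH] //; rewrite factS expnS; apply: leq_mul => //.
by apply: leq_trans IH _; apply: leq_expn2r.
Qed.

(* The elementary bound 'C(N, m) >= ((N - m) / m)^m, cleared of denominators. *)
Lemma binomial_lower N m : ((N - m) ^ m <= 'C(N, m) * m ^ m)%N.
Proof.
apply: leq_trans (ffact_ge N m) _.
by rewrite -bin_ffact leq_mul2l fact_le_expn orbT.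
Qed.

Lemma bin2_mul2 n : ('C(n, 2) * 2 = n * (n - 1))%N.
Proof. by rewrite -[2%N]/(2`!) bin_ffact ffactnS ffactn1 subn1. Qed.

(* With m ~ d n / 2 edges out of N = 'C(n, 2), the ratio (N - m) / m is at
   least n / (2 d) once n >= 2 d + 3. *)
Lemma edge_ratio d n m : (0 < d)%N -> (2 * d + 3 <= n)%N ->
  (2 * m <= d * (n - 1) + 1)%N -> (n * m <= ('C(n, 2) - m) * (2 * d))%N.
Proof. by have := bin2_mul2 n; move=> *; nia. Qed.

Local Open Scope R_scope.

Lemma lerINR {a b : nat} : (a <= b)%N -> INR a <= INR b.
Proof. by move/leP; apply: le_INR. Qed.

Lemma INR_gt0 {k : nat} : (0 < k)%N -> 0 < INR k.
Proof. by move/ltP; apply: lt_0_INR. Qed.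

Lemma INR_expn a e : INR (a ^ e)%N = INR a ^ e.
Proof. by elim: e => [|e IH] //; rewrite expnS mult_INR IH. Qed.

Lemma ln_le_compat {x y : R} : 0 < x -> x <= y -> ln x <= ln y.
Proof.
move=> x_pos /Rle_lt_or_eq_dec [xy|<-]; last exact: Rle_refl.
exact/Rlt_le/ln_increasing.
Qed.

Lemma card_good_half (T : finType) (L : {set T}) (p : pred T) :
  INR #|[set x in L | ~~ p x]| / INR #|L| < 1/2 ->
  (#|L| <= 2 * #|[set x in L | p x]|)%N.
Proof.
have split_L : (#|[set x in L | p x]| + #|[set x in L | ~~ p x]| = #|L|)%N.
  rewrite -(cardsID [set x | p x] L); congr addn; apply: eq_card => x;
  by rewrite !inE andbC.
move: split_L; set good := #|[set x in L | p x]|; set bad := #|[set x in L | ~~ p x]|.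
have [->|L_pos] := posnP #|L| => // split_L small_bad.
have L_posR := INR_gt0 L_pos.
have : INR (2 * bad) < INR #|L|.
  rewrite mult_INR [INR 2]/=.
  have := Rmult_lt_compat_r _ _ _ L_posR small_bad.
  by rewrite /Rdiv Rmult_assoc Rinv_l; lra.
by move/INR_lt/ltP; lia.
Qed.

(* For n large enough that the failure probability is below 1/2, the
   isomorphism classes of tiny graphs, of size at most n! each, cover at least
   half of the labelled graphs. *)
Lemma labelled_le_countX d c n : good_c d c -> (1 <= n)%N ->
  200 * sqrt (INR d / INR n) <= 1/2 ->
  (#|labelled n (nedges d n)| <= 2 * countX d c n * n`!)%N.
Proof.
move=> hc n_pos small.
have half : (#|labelled n (nedges d n)|
    <= 2 * #|[set G in labelled n (nedges d n) | tinyb d c G]|)%N.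
  by apply: card_good_half; have := hc n n_pos; rewrite /prob_not_tiny; lra.
apply: (leq_trans half).
by rewrite -mulnA leq_mul2l card_le_classes.
Qed.

(* The counting inequality of the theorem, in integers:
   ((N - m)/m)^m <= C(N, m) <= 2 countX n! <= 2 countX n^n. *)
Lemma countX_power_bound d c n : good_c d c -> (1 <= n)%N ->
  200 * sqrt (INR d / INR n) <= 1/2 ->
  (('C(n, 2) - nedges d n) ^ nedges d n
     <= 2 * countX d c n * n ^ n * nedges d n ^ nedges d n)%N.
Proof.
move=> hc n_pos small; apply: leq_trans (binomial_lower _ _) _.
rewrite leq_mul2r; apply/orP; right.
apply: leq_trans (card_labelled_ge _ _) _.
apply: leq_trans (labelled_le_countX _ _ _ hc n_pos small) _.
by rewrite leq_mul2l fact_le_expn orbT.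
Qed.

Lemma ln_power_bound a X n m : (0 < a)%N -> (0 < m)%N -> (0 < n)%N ->
  (a ^ m <= 2 * X * n ^ n * m ^ m)%N ->
  (0 < X)%N /\
  INR m * (ln (INR a) - ln (INR m)) - INR n * ln (INR n) - ln 2 <= ln (INR X).
Proof.
move=> a_pos m_pos n_pos bound.
have X_pos : (0 < X)%N.
  rewrite lt0n; apply/eqP => X0; move: bound; rewrite X0.
  by have := expn_gt0 a m; rewrite a_pos /=; lia.
split=> //.
have aR := INR_gt0 a_pos; have mR := INR_gt0 m_pos; have nR := INR_gt0 n_pos.
have XR := INR_gt0 X_pos.
have two_X : 0 < 2 * INR X by lra.
have two_X_nn : 0 < 2 * INR X * INR n ^ n by apply: Rmult_lt_0_compat => //; exact: pow_lt.
have := lerINR bound; rewrite !mult_INR !INR_expn (_ : INR 2 = 2); last by simpl; lra.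
move/(ln_le_compat (pow_lt _ m aR)).
rewrite (ln_mult _ _ two_X_nn (pow_lt _ _ mR)) (ln_mult _ _ two_X (pow_lt _ _ nR)).
by rewrite (ln_mult _ _ Rlt_0_2 XR) !ln_pow //; lra.
Qed.

Lemma failure_bound_small d n : (1 <= d)%N -> (20 ^ 4 * d <= n)%N ->
  200 * sqrt (INR d / INR n) <= 1/2.
Proof.
move=> d_pos large.
have dR : 1 <= INR d by apply: lerINR d_pos.
have nR : 160000 * INR d <= INR n by have := lerINR large; rewrite mult_INR INR_expn /=; lra.
have ratio : INR d / INR n <= (1/400) ^ 2.
  apply: (Rmult_le_reg_r (INR n)); first lra.
  by rewrite /Rdiv Rmult_assoc Rinv_l; lra.
by have := sqrt_le_1_alt _ _ ratio; rewrite sqrt_pow2; lra.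
Qed.

(* From n = threshold d on, all estimates hold: the failure probability is
   below 1/2 and the bound of edge_ratio applies. *)
Definition threshold (d : nat) : nat := (20 ^ 4 * d + 2 * d + 3)%N.

Definition expo (d n : nat) : R := (INR d - 2) * INR n / 2.

Definition defect (d n : nat) : R :=
  INR d / 2 * ln (INR n) + INR d * INR n / 2 * ln (2 * INR d) + ln 2.

Lemma ln_countX_lower d c n : good_c d c -> (1 <= d)%N -> (threshold d <= n)%N ->
  (0 < countX d c n)%N /\ expo d n * ln (INR n) - defect d n <= ln (INR (countX d c n)).
Proof.
rewrite /threshold => hc d_pos large.
have n_pos : (0 < n)%N by lia.
have := countX_power_bound d c n hc n_pos (failure_bound_small d n d_pos ltac:(lia)).
set m := nedges d n; set a := ('C(n, 2) - m)%N => bound.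
have m_bounds : (d * (n - 1) <= 2 * m <= d * (n - 1) + 1)%N by rewrite /m /nedges; lia.
have ratio : (n * m <= a * (2 * d))%N by apply: edge_ratio => //; lia.
have m_pos : (0 < m)%N by nia.
have a_pos : (0 < a)%N by nia.
have [X_pos lnX] := ln_power_bound a (countX d c n) n m a_pos m_pos n_pos bound.
split=> //.
have aR := INR_gt0 a_pos; have mR := INR_gt0 m_pos; have nR := INR_gt0 n_pos.
have dR : 1 <= INR d by apply: lerINR d_pos.
have nd : 2 * INR d + 3 <= INR n.
  have nd_nat : (2 * d + 3 <= n)%N by lia.
  by have := lerINR nd_nat; rewrite !plus_INR /=; lra.
have m_lower : INR d * (INR n - 1) <= 2 * INR m.
  have := lerINR (proj1 (andP m_bounds)); rewrite !mult_INR minus_INR /=; [lra|apply/leP; lia].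
have ln_ratio : ln (INR n) - ln (2 * INR d) <= ln (INR a) - ln (INR m).
  have two_d : 0 < 2 * INR d by lra.
  have := lerINR ratio; rewrite !mult_INR (_ : INR 2 = 2); last by simpl; lra.
  move/(ln_le_compat (Rmult_lt_0_compat _ _ nR mR)).
  by rewrite (ln_mult _ _ nR mR) (ln_mult _ _ aR two_d); lra.
have ln_2d : ln (2 * INR d) <= ln (INR n) by apply: ln_le_compat; lra.
have ln_2d_pos : 0 <= INR d * ln (2 * INR d).
  by apply: Rmult_le_pos; [lra|rewrite -ln_1; apply: ln_le_compat; lra].
have from_ratio : INR m * (ln (INR n) - ln (2 * INR d)) <= INR m * (ln (INR a) - ln (INR m)).
  by apply: Rmult_le_compat_l; lra.
have from_m : INR d * (INR n - 1) / 2 * (ln (INR n) - ln (2 * INR d))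
    <= INR m * (ln (INR n) - ln (2 * INR d)).
  by apply: Rmult_le_compat_r; lra.
rewrite /expo /defect; lra.
Qed.

Definition err (d n : nat) : R := defect d n / (expo d n * ln (INR n)).

(* ln x < x, from exp x > 1 + x. *)
Lemma ln_lt_id x : 0 < x -> ln x < x.
Proof.
move=> x_pos; have x_exp : x < exp x.
  by have := exp_ineq1 x (Rgt_not_eq _ _ x_pos); lra.
by have := ln_increasing _ _ x_pos x_exp; rewrite ln_exp.
Qed.

Lemma ln_eventually_large B : exists N : nat, forall n : nat, (N <= n)%N -> B < ln (INR n).
Proof.
have [N hN] := INR_archimed 1 (exp B) Rlt_0_1.
exists N => n le_Nn.
have nR := lerINR le_Nn; have expB := exp_pos B.
by rewrite -[B]ln_exp; apply: ln_increasing; lra.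
Qed.

(* For d >= 3, err d n = O(1 / ln n): the defect is O(n) while
   expo d n >= n / 2. *)
Lemma err_bound d : (3 <= d)%N ->
  exists A, 0 <= A /\ forall n : nat, (2 <= n)%N ->
    0 <= err d n /\ err d n * ln (INR n) <= A.
Proof.
move=> d3; exists (INR d + INR d * ln (2 * INR d) + 2).
have dR : 3 <= INR d by have := lerINR d3; rewrite /=; lra.
have ln_2d : 0 <= ln (2 * INR d) by rewrite -ln_1; apply: ln_le_compat; lra.
have ln_2d_d : 0 <= INR d * ln (2 * INR d) by apply: Rmult_le_pos; lra.
split; first lra.
move=> n n2; have nR : 2 <= INR n by have := lerINR n2; rewrite /=; lra.
have L_pos : 0 < ln (INR n) by rewrite -ln_1; apply: ln_increasing; lra.
have L_le_n := ln_lt_id (INR n) ltac:(lra).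
have ln2_le : ln 2 <= ln (INR n) by apply: ln_le_compat; lra.
have E_pos : INR n / 2 <= expo d n.
  have : 0 <= (INR d - 3) * INR n by apply: Rmult_le_pos; lra.
  by rewrite /expo; lra.
have dn_2d : 0 <= INR d * ln (2 * INR d) * INR n by apply: Rmult_le_pos; lra.
have dL : INR d * ln (INR n) <= INR d * INR n by apply: Rmult_le_compat_l; lra.
have dL_pos : 0 <= INR d * ln (INR n) by apply: Rmult_le_pos; lra.
have K_pos : 0 <= defect d n by have := ln_lt_2; rewrite /defect; lra.
have K_le : defect d n <= (INR d + INR d * ln (2 * INR d) + 2) * expo d n.
  apply: (Rle_trans _ ((INR d + INR d * ln (2 * INR d) + 2) * (INR n / 2))).
    by rewrite /defect; lra.
  by apply: Rmult_le_compat_l; lra.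
have err_L : err d n * ln (INR n) = defect d n / expo d n.
  by rewrite /err; field; split; lra.
split.
  by rewrite /err; apply: Rmult_le_pos => //; apply/Rlt_le/Rinv_0_lt_compat; nra.
rewrite err_L; apply: (Rmult_le_reg_r (expo d n)); first lra.
by rewrite /Rdiv Rmult_assoc Rinv_l; lra.
Qed.

Lemma err_vanishes d : (3 <= d)%N -> forall eps : R, 0 < eps ->
  exists N : nat, forall n : nat, (N <= n)%N -> Rabs (err d n) < eps.
Proof.
move=> d3 eps eps_pos; have [A [A_pos bound]] := err_bound d d3.
have [N hN] := ln_eventually_large (A / eps).
exists (N + 2)%N => n le_n.
have [err_pos err_L] := bound n ltac:(lia).
have L_large := hN n ltac:(lia).
have A_eps : 0 <= A / eps by apply: Rmult_le_pos => //; apply/Rlt_le/Rinv_0_lt_compat.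
rewrite Rabs_pos_eq //; apply: (Rmult_lt_reg_r (ln (INR n))); first lra.
apply: Rle_lt_trans err_L _.
have := Rmult_lt_compat_l eps _ _ eps_pos L_large.
by rewrite /Rdiv Rmult_comm Rmult_assoc Rinv_l; lra.
Qed.

Lemma expo_err_identity d n : (3 <= d)%N -> (2 <= n)%N ->
  (INR d - 2) * INR n / 2 * (1 - err d n) * ln (INR n) = expo d n * ln (INR n) - defect d n.
Proof.
move=> d3 n2.
have dR : 3 <= INR d by have := lerINR d3; rewrite /=; lra.
have nR : 2 <= INR n by have := lerINR n2; rewrite /=; lra.
have L_pos : 0 < ln (INR n) by rewrite -ln_1; apply: ln_increasing; lra.
by rewrite /err /expo; field; split; lra.
Qed.

Lemma Rpower_le_of_ln x e X : 0 < X -> e * ln x <= ln X -> Rpower x e <= X.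
Proof.
rewrite /Rpower => X_pos /Rle_lt_or_eq_dec [lt|->]; last by rewrite exp_ln; lra.
by rewrite -[X in _ <= X](exp_ln _ X_pos); apply/Rlt_le/exp_increasing.
Qed.

Lemma Rpower_nonpos_le1 x e : 1 <= x -> e <= 0 -> Rpower x e <= 1.
Proof.
by move=> x1 e_neg; rewrite -(Rpower_O x); [apply: Rle_Rpower|lra].
Qed.

(* No constant is admissible for d = 0: the failure probability would have to
   be negative. *)
Lemma good_c_d_pos d c : good_c d c -> (0 < d)%N.
Proof.
case: (posnP d) => // -> /(_ 1%N (leqnn 1)).
rewrite /prob_not_tiny Rdiv_0_l sqrt_0 Rmult_0_r.
set bad := INR _; set all := INR _.
have bad_pos : 0 <= bad by apply: pos_INR.
have [all_pos|all0] := Rle_lt_or_eq_dec 0 all (pos_INR _).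
  have : 0 <= bad / all by apply: Rmult_le_pos => //; apply/Rlt_le/Rinv_0_lt_compat.
  lra.
by rewrite -all0 Rdiv_0_r; lra.
Qed.

Theorem mainTheorem15 (d : nat) (c : R) (hc : good_c d c) :
  exists f : nat -> R,
    (forall eps : R, 0 < eps ->
       exists N : nat, forall n : nat, (N <= n)%N -> Rabs (f n) < eps) /\
    (exists N : nat, forall n : nat, (N <= n)%N ->
       Rpower (INR n) ((INR d - 2) * INR n / 2 * (1 - f n)) <= INR (countX d c n)).
Proof.
have d_pos := good_c_d_pos d c hc.
have lower n := ln_countX_lower d c n hc d_pos.
have large_n n : (threshold d <= n)%N -> (2 <= n)%N by rewrite /threshold; lia.
case: (leqP 3 d) => [d3 | d_small].
- exists (err d); split; first exact: err_vanishes.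
  exists (threshold d) => n large; have [X_pos lnX] := lower n large.
  apply: Rpower_le_of_ln; first exact: INR_gt0.
  by rewrite expo_err_identity // large_n.
- exists (fun _ => 0); split.
    by move=> eps eps_pos; exists 0%N => n _; rewrite Rabs_R0.
  exists (threshold d) => n large; have [X_pos _] := lower n large.
  apply: Rle_trans (lerINR X_pos); apply: Rpower_nonpos_le1.
    by have := lerINR (large_n n large); rewrite /=; lra.
  have dR : INR d <= 2 by have := lerINR (d_small : (d <= 2)%N); rewrite /=; lra.
  by have := pos_INR n; nra.
Qed.
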